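(* Let $G$ be a finitely generated group that admits a surjective homomorphism onto $\mathbb{Z}^2$. Then for every finite symmetric generating set $X$ of $G$, the geodesic growth of $G$ with respect to $X$ is exponential: there exists $b>1$ with $\Gamma_{G,X}(n)\ge b^n$ for all $n\in\mathbb{N}$.
   Context: Generating sets may contain repeated elements (formally, a finite symmetric alphabet with an epimorphism from the free monoid onto $G$). A word over $X$ is a geodesic if its length equals the word length of the element it represents; $\Gamma_{G,X}(n)$ is the number of geodesic words over $X$ of length at most $n$. *)

From mathcomp Require Import all_boot.
From mathcomp Require Import ssralg ssrint.
From Stdlib Require Import ClassicalEpsilon Reals.
Set Implicit Arguments. Unset Strict Implicit. Unset Printing Implicit Defensive.

Definition group_axioms (G : Type) (mul : G -> G -> G) (inv : G -> G) (e : G) : Prop :=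
  (forall a b c, mul a (mul b c) = mul (mul a b) c) /\
  (forall a, mul e a = a) /\ (forall a, mul a e = a) /\
  (forall a, mul (inv a) a = e) /\ (forall a, mul a (inv a) = e).

Definition pbool (P : Prop) : bool := if excluded_middle_informative P then true else false.

Section Words.
Variables (G : Type) (mul : G -> G -> G) (inv : G -> G) (e : G).
Variables (X : finType) (f : X -> G).

Definition eval_word (w : seq X) : G := foldr (fun x g => mul (f x) g) e w.

Definition generating : Prop := forall g : G, exists w : seq X, eval_word w = g.

Definition symmetric_alph : Prop := forall x : X, exists y : X, f y = inv (f x).

Definition geodesic (w : seq X) : Prop :=
  forall w' : seq X, eval_word w' = eval_word w -> size w <= size w'.

Definition geod_growth (n : nat) : nat :=
  \sum_(k < n.+1) #|[set t : k.-tuple X | pbool (geodesic t)]|.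
End Words.

Definition fin_generated (G : Type) (mul : G -> G -> G) (e : G) : Prop :=
  exists (X : finType) (f : X -> G), generating mul e f.

Definition epi_Z2 (G : Type) (mul : G -> G -> G) (phi : G -> int * int) : Prop :=
  (forall a b, phi (mul a b) = (GRing.add (phi a).1 (phi b).1, GRing.add (phi a).2 (phi b).2)) /\
  (forall z : int * int, exists g, phi g = z).

From mathcomp Require Import all_boot.
From Stdlib Require Import Reals.
From mathcomp Require Import all_order all_algebra zify ring.
From Stdlib Require Import ClassicalEpsilon.
Import Order.TTheory GRing.Theory Num.Theory.

Set Implicit Arguments.
Unset Strict Implicit.
Unset Printing Implicit Defensive.

(* Compose the epimorphism onto Z^2 with a linear form l, and let
   M be the maximum of l over the images of the letters.  Every word w
   satisfies l(w) <= |w| M, so a word all of whose letters attain M is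
   geodesic as soon as M > 0.  Taking for l the outer normal of an edge of
   the convex hull of the images of the letters, two distinct letters attain
   M, and M > 0 because the images generate Z^2; this gives 2^n geodesic
   words of length n. *)

Lemma exists_maximal (T : finType) (R : rel T) (A : {pred T}) (y0 : T) :
  irreflexive R -> transitive R -> y0 \in A ->
  exists2 y, y \in A & forall z, z \in A -> ~~ R y z.
Proof.
move=> irrR trR Ay0.
(* A strict upper bound of y has strictly more elements below it. *)
case: (arg_maxnP (fun y => #|[pred z | R z y]|) Ay0) => y Ay ymax.
exists y => // z Az; apply/negP => Ryz.
have := ymax z Az; rewrite /= leqNgt => /negP; apply.
apply: proper_card; apply/properP; split.
  by apply/subsetP => t; rewrite !inE => /trR; apply.
by exists y; rewrite !inE ?Ryz ?irrR.
Qed.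

Local Open Scope ring_scope.

Lemma sumr_le_size (I : Type) (s : seq I) (F : I -> int) (M : int) :
  (forall i, F i <= M) -> \sum_(i <- s) F i <= (size s)%:Z * M.
Proof.
move=> le_FM; elim: s => [|i s IH]; first by rewrite big_nil mul0r.
by rewrite big_cons /= -addn1 PoszD mulrDl mul1r addrC lerD.
Qed.

Lemma sumr_eq_size (I : eqType) (s : seq I) (F : I -> int) (M : int) :
  (forall i, i \in s -> F i = M) -> \sum_(i <- s) F i = (size s)%:Z * M.
Proof.
elim: s => [|i s IH] F_M; first by rewrite big_nil mul0r.
rewrite big_cons F_M ?mem_head // IH => [|j sj]; last by rewrite F_M // inE sj orbT.
by rewrite /= -addn1 PoszD mulrDl mul1r addrC.
Qed.

Definition det2 (u v : int * int) : int := u.1 * v.2 - u.2 * v.1.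

Definition lexlt (u v : int * int) : bool :=
  (u.1 < v.1) || (u.1 == v.1) && (u.2 < v.2).

Lemma det2_addr (u v w : int * int) : det2 u (v + w) = det2 u v + det2 u w.
Proof. rewrite /det2 /=; ring. Qed.

Lemma det2_subr (u v w : int * int) : det2 u (v - w) = det2 u v - det2 u w.
Proof. rewrite /det2 /=; ring. Qed.

Lemma det2_sum (X : Type) (u : int * int) (s : seq X) (v : X -> int * int) :
  det2 u (\sum_(x <- s) v x) = \sum_(x <- s) det2 u (v x).
Proof.
elim: s => [|x s IH]; first by rewrite !big_nil /det2 /=; ring.
by rewrite !big_cons det2_addr IH.
Qed.

Lemma det2_sum_le (X : Type) (u : int * int) (M : int) (s : seq X)
    (v : X -> int * int) :
  (forall x, det2 u (v x) <= M) -> det2 u (\sum_(x <- s) v x) <= (size s)%:Z * M.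
Proof. by move=> le_vM; rewrite det2_sum sumr_le_size. Qed.

Lemma det2_subl_diag (u v : int * int) : det2 (v - u) v = det2 (v - u) u.
Proof. rewrite /det2 /=; ring. Qed.

Lemma lexlt_subr0 (u w : int * int) : ~~ lexlt w u -> u != w -> lexlt (u - w) 0.
Proof.
case: u => a b; case: w => c d; rewrite /lexlt xpair_eqE /=.
by move=> /norP[? ?] /nandP[] /eqP ?; apply/orP; lia.
Qed.

(* Strictly below 0 in lexicographic order: the open lower half plane
   (with half of its boundary line), where det2 compares directions. *)
Lemma det2_pos_trans (a b c : int * int) : lexlt a 0 -> lexlt b 0 -> lexlt c 0 ->
  0 < det2 a b -> 0 < det2 b c -> 0 < det2 a c.
Proof.
case: a => a1 a2; case: b => b1 b2; case: c => c1 c2; rewrite /lexlt /det2 /=.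
move=> /orP Ha /orP Hb /orP Hc Hab Hbc.
have a1_neg : a1 < 0.
  case: Ha => [//|/andP[/eqP a10 a2_neg]]; rewrite a10 in Hab.
  by case: Hb => [|/andP[/eqP b10 _]]; nia.
have b1_le0 : b1 <= 0 by case: Hb => [|/andP[]]; lia.
have c1_le0 : c1 <= 0 by case: Hc => [|/andP[]]; lia.
have cramer : (b1 * c2 - b2 * c1) * a1
    = - (a1 * b2 - a2 * b1) * c1 + (a1 * c2 - a2 * c1) * b1 by ring.
nia.
Qed.

Definition spanning (X : Type) (v : X -> int * int) : Prop :=
  forall z, exists s : seq X, z = \sum_(x <- s) v x.

Lemma spanning_det2_bound_pos (X : Type) (v : X -> int * int) (d : int * int)
    (M : int) :
  spanning v -> d != 0 -> (forall x, det2 d (v x) <= M) -> 0 < M.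
Proof.
move=> span d_neq0 le_vM.
have [s def_z] := span (- d.2, d.1).
have := det2_sum_le s le_vM; rewrite -def_z /det2 /=.
have : (d.1 != 0) || (d.2 != 0).
  by move: d_neq0; case: (d) => d1 d2; rewrite xpair_eqE negb_and.
move=> d_nz bound; rewrite ltNge; apply/negP => M_le0.
have : (size s)%:Z * M <= 0 by rewrite mulr_ge0_le0.
by case/orP: d_nz; rewrite neq_lt => /orP[]; nia.
Qed.

Lemma spanning_nonconstant (X : finType) (v : X -> int * int) :
  spanning v -> exists x y, v x != v y.
Proof.
move=> span; have [s def_e1] := span (1, 0).
case: s def_e1 => [|x0 s] def_e1; first by move: def_e1; rewrite big_nil.
case: (boolP [forall y, v y == v x0]) => [/forallP v_const|/forallPn [y]]; last first.
  by exists y, x0.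
have [v0_eq0|v0_neq0] := eqVneq (v x0) 0; last first.
  suff : (0 : int) < 0 by rewrite ltxx.
  apply: (spanning_det2_bound_pos span v0_neq0) => y.
  by rewrite (eqP (v_const y)) /det2 mulrC subrr.
by move: def_e1; rewrite big1 // => y _; rewrite (eqP (v_const y)).
Qed.

(* Two letters spanning an edge of the convex hull of the images: take v x1
   lexicographically maximal, then v x2 extremal in angle around v x1. *)
Lemma supporting_edge (X : finType) (v : X -> int * int) x y :
  v x != v y -> exists x1 x2, v x1 != v x2 /\
    forall z, det2 (v x2 - v x1) (v z) <= det2 (v x2 - v x1) (v x1).
Proof.
move=> v_xy.
have lexlt_irr : irreflexive (fun x y : X => lexlt (v x) (v y)).
  by move=> z; rewrite /lexlt !ltxx andbF.
have lexlt_trans : transitive (fun x y : X => lexlt (v x) (v y)).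
  by move=> z1 z2 z3; rewrite /lexlt => /orP ? /orP ?; apply/orP; lia.
have [x1 _ x1_max] := exists_maximal lexlt_irr lexlt_trans (mem_enum X x).
set v1 := v x1.
have below z : v z != v1 -> lexlt (v z - v1) 0.
  exact/lexlt_subr0/x1_max/mem_enum.
pose R := fun y z => 0 < det2 (v y - v1) (v z - v1).
have R_irr : irreflexive R by move=> z; rewrite /R /det2 mulrC subrr ltxx.
have R_neq z1 z2 : R z1 z2 -> v z1 != v1 /\ v z2 != v1.
  rewrite /R => R12; split; apply/negP => /eqP E; move: R12;
  by rewrite E subrr /det2 /= ?mul0r ?mulr0 ?subrr ltxx.
have R_trans : transitive R.
  move=> z2 z1 z3 R12 R23; have [/below ? /below ?] := R_neq _ _ R12.
  by have [_ /below ?] := R_neq _ _ R23; apply: (det2_pos_trans _ _ _ R12 R23).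
have [x0 x0_v1] : exists x0, v x0 != v1.
  by case: (eqVneq (v x) v1) => [E|]; [exists y; rewrite -E eq_sym|exists x].
have [x2 x2_v1 x2_max] := exists_maximal (A := [pred z | v z != v1])
  R_irr R_trans x0_v1.
exists x1, x2; split; first by rewrite eq_sym.
move=> z; case: (eqVneq (v z) v1) => [-> //|z_v1].
by have := x2_max z z_v1; rewrite /R det2_subr -leNgt subr_le0.
Qed.

Section Words.
Variables (G : Type) (mul : G -> G -> G) (e : G) (X : finType) (f : X -> G).
Hypothesis mul_ee : mul e e = e.

Lemma eval_word_morph (V : zmodType) (h : G -> V) :
  {morph h : a b / mul a b >-> a + b} ->
  forall w, h (eval_word mul e f w) = \sum_(x <- w) h (f x).
Proof.
move=> h_morph; have h_e : h e = 0.
  by apply: (@addrI _ (h e)); rewrite -h_morph mul_ee addr0.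
by elim=> [|x w IH]; rewrite ?big_nil ?big_cons //= h_morph IH.
Qed.

Lemma geodesic_maximal_letters (h : G -> int) (M : int) (w : seq X) :
  {morph h : a b / mul a b >-> a + b} -> 0 < M -> (forall x, h (f x) <= M) ->
  all (fun x => h (f x) == M) w -> geodesic mul e f w.
Proof.
move=> h_morph M_gt0 le_hM /allP w_M w' eq_w'.
have := sumr_le_size w' le_hM; rewrite -eval_word_morph // eq_w'.
rewrite eval_word_morph // (sumr_eq_size (M := M)) => [|x /w_M /eqP //].
by rewrite ler_pM2r // lez_nat.
Qed.

Lemma geod_growth_ge_card (A : {set X}) (n : nat) :
  (forall w, all [in A] w -> geodesic mul e f w) ->
  leq (expn #|A| n) (geod_growth mul e f n).
Proof.
move=> geoA; rewrite /geod_growth big_ord_recr /=; apply: leq_trans (leq_addl _ _).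
pose T := {x : X | x \in A}.
have val_inj : injective (fun t : n.-tuple T => map_tuple val t).
  by move=> t t' /(congr1 val) /(inj_map val_inj) /val_inj.
rewrite -[#|A|]card_sig -card_tuple -(card_imset _ val_inj).
apply/subset_leq_card/subsetP => _ /imsetP[t _ ->]; rewrite inE /pbool.
case: excluded_middle_informative => // not_geo; exfalso; apply/not_geo/geoA.
by apply/allP => _ /mapP[x _ ->]; apply: valP.
Qed.

Lemma spanning_of_generating (phi : G -> int * int) :
  {morph phi : a b / mul a b >-> a + b} -> (forall z, exists g, phi g = z) ->
  generating mul e f -> spanning (fun x => phi (f x)).
Proof.
move=> phi_morph phi_onto gen z; have [g <-] := phi_onto z; have [w <-] := gen g.
by exists w; rewrite eval_word_morph.
Qed.

End Words.

Lemma INR_expn (m n : nat) : INR (expn m n) = pow (INR m) n.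
Proof. by elim: n => [|n IH] //; rewrite expnS mult_INR IH. Qed.

Theorem corollary3p2 (G : Type) (mul : G -> G -> G) (inv : G -> G) (e : G) :
  group_axioms mul inv e ->
  fin_generated mul e ->
  (exists phi : G -> int * int, epi_Z2 mul phi) ->
  forall (X : finType) (f : X -> G),
    generating mul e f -> symmetric_alph inv f ->
    exists b : R, Rlt 1 b /\
      forall n : nat, Rle (pow b n) (INR (geod_growth mul e f n)).
Proof.
move=> [_ [mul1g _]] _ [phi [phi_morph phi_onto]] X f gen _.
have mul_ee := mul1g e.
have span := spanning_of_generating mul_ee phi_morph phi_onto gen.
have [x [y v_xy]] := spanning_nonconstant span.
have [x1 [x2 [v_x12 supp]]] := supporting_edge (v := fun x => phi (f x)) v_xy.
set d := phi (f x2) - phi (f x1); set M := det2 d (phi (f x1)).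
have M_gt0 : 0 < M.
  by apply: spanning_det2_bound_pos span _ supp; rewrite subr_eq0 eq_sym.
have h_morph : {morph (fun g => det2 d (phi g)) : a b / mul a b >-> a + b}.
  by move=> a b; rewrite /= phi_morph det2_addr.
have geo w : all [in [set x1; x2]] w -> geodesic mul e f w.
  move=> /allP w12; apply: (geodesic_maximal_letters mul_ee h_morph M_gt0 supp).
  apply/allP => z /w12; rewrite !inE => /orP[] /eqP -> //=.
  by rewrite det2_subl_diag.
exists (INR 2); split; first exact: (lt_INR 1 2 (Nat.lt_succ_diag_r 1)).
move=> n; rewrite -INR_expn; apply/le_INR/ssrnat.leP.
have x12 : x1 != x2 by apply: contraNneq v_x12 => ->.
by have := geod_growth_ge_card n geo; rewrite cards2 x12.
Qed.
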